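(* Let $A$ be a VPA. The languages $S_0=\sigma_0(D)$ and $S_1=\sigma_1(W\setminus\{\varepsilon\})$ are context-free.
   Context: VPA $A=(Q,\Sigma,\Gamma,\bot,q_0,\delta,F)$ over a pushdown alphabet $\Sigma=\Sigma_c\cup\Sigma_r\cup\Sigma_{\mathit{int}}$ (deterministic; call letters push a symbol of $\Gamma\setminus\{\bot\}$, internal letters change only the state, return letters pop the top symbol $\gamma\ne\bot$ and use it, or read $\bot$ without popping); configurations $\alpha q$, $\alpha\in\bot(\Gamma\setminus\{\bot\})^*$; $\delta(c,w)$ the configuration reached from $c$ on $w$; $\mathcal L(c)$ the set of words leading from $c$ to a state in $F$. Well-matched words $W$: smallest set containing $\varepsilon$ and $\Sigma_{\mathit{int}}$, closed under concatenation and under $w\mapsto awb$ ($a\in\Sigma_c$, $b\in\Sigma_r$). Descending words $D$: words factorizable into well-matched factors and return letters. $\varphi:W\to Q^Q$ is the homomorphism with $\delta(\alpha p,w)=\alpha\,\varphi(w)(p)$. $\mathrm{rConf}$: configurations reachable from $\bot q_0$; $\mathsf{rep}(c)$: length-lexicographically least (for fixed linear orders on $\Gamma,Q$) $c'\in\mathrm{rConf}$ with $\mathcal L(c')=\mathcal L(c)$; $\nu_A(w)=\mathsf{rep}(\delta(\bot q_0,w))$. For $w=a_1\cdots a_n\in D$ each suffix is descending and $\nu_A(a_i\cdots a_n)=\bot q_i$ for some $q_i\in Q$; $\sigma_0(w)=q_1\cdots q_n\in Q^*$; for nonempty $w\in W$, $\sigma_1(w)=\varphi(w)q_2\cdots q_n$,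 a word over the alphabet $Q\cup Q^Q$. *)

From mathcomp Require Import all_boot.
Set Implicit Arguments. Unset Strict Implicit. Unset Printing Implicit Defensive.

Record cfg (T : eqType) := CFG {
  nt : finType;
  start : nt;
  rules : seq (nt * seq (nt + T)%type) }.

Inductive derives (T : eqType) (g : cfg T) : seq (nt g + T)%type -> seq T -> Prop :=
| der_nil : @derives T g [::] [::]
| der_t (t : T) s w : @derives T g s w -> @derives T g (inr t :: s) (t :: w)
| der_nt (X : nt g) rhs s u w :
    (X, rhs) \in rules g -> @derives T g rhs u -> @derives T g s w ->
    @derives T g (inl X :: s) (u ++ w).

Definition generates (T : eqType) (g : cfg T) (w : seq T) : Prop :=
  @derives T g [:: inl (start g)] w.

Definition context_free (T : eqType) (L : seq T -> Prop) : Prop :=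
  exists g : cfg T, forall w, L w <-> generates g w.

Inductive letter_kind := Call | Ret | Int.

Inductive WM (Sigma : Type) (kind : Sigma -> letter_kind) : seq Sigma -> Prop :=
| WM_nil : @WM Sigma kind [::]
| WM_int a : kind a = Int -> @WM Sigma kind [:: a]
| WM_cat u v : @WM Sigma kind u -> @WM Sigma kind v -> @WM Sigma kind (u ++ v)
| WM_nest a u b : kind a = Call -> kind b = Ret -> @WM Sigma kind u ->
    @WM Sigma kind (a :: rcons u b).

Inductive Desc (Sigma : Type) (kind : Sigma -> letter_kind) : seq Sigma -> Prop :=
| D_nil : @Desc Sigma kind [::]
| D_wm u v : @WM Sigma kind u -> @Desc Sigma kind v -> @Desc Sigma kind (u ++ v)
| D_ret b v : kind b = Ret -> @Desc Sigma kind v -> @Desc Sigma kind (b :: v).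

(* ---------- Deterministic VPA ----------
   Stack alphabet Gamma = {bot} + G; G is Gamma \ {bot}.  A configuration
   alpha q with alpha = bot g_1 ... g_k is represented by ([:: g_1; ...; g_k], q)
   (top of stack = last element).  Transition functions are total on all
   letters, only the one matching the kind of the letter is used. *)
Record vpa (Sigma : finType) (kind : Sigma -> letter_kind) := VPA {
  Q : finType;
  G : finType;
  q0 : Q;
  final : {set Q};
  dcall : Q -> Sigma -> Q * G;
  dint  : Q -> Sigma -> Q;
  dret  : Q -> Sigma -> option G -> Q   (* return: top symbol, None = bot (not popped) *)
}.

Section VPA.
Variables (Sigma : finType) (kind : Sigma -> letter_kind) (A : vpa kind).

Definition config := (seq (G A) * Q A)%type.

Definition step (c : config) (a : Sigma) : config :=
  match kind a with
  | Call => let: (q', g) := dcall c.2 a in (rcons c.1 g, q')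
  | Int => (c.1, dint c.2 a)
  | Ret => match rev c.1 with
           | [::] => (c.1, dret c.2 a None)
           | g :: r => (rev r, dret c.2 a (Some g))
           end
  end.

Definition delta (c : config) (w : seq Sigma) : config := foldl step c w.

Definition init : config := ([::], q0 A).

Definition lang (c : config) (w : seq Sigma) : Prop := (delta c w).2 \in final A.

Definition same_lang (c c' : config) : Prop := forall w, lang c w <-> lang c' w.

Definition reachable (c : config) : Prop := exists w, delta init w = c.

Definition phi (w : seq Sigma) : {ffun Q A -> Q A} :=
  [ffun p => (delta ([::], p) w).2].

(* Length-lexicographic order on configurations (as words bot alpha q over
   Gamma u Q), for linear orders on G and Q given by injective ranks. *)
Variables (rkG : G A -> nat) (rkQ : Q A -> nat).

Fixpoint lex_le (s t : seq nat) : bool :=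
  match s, t with
  | [::], _ => true
  | _ :: _, [::] => false
  | x :: s', y :: t' => (x < y) || ((x == y) && lex_le s' t')
  end.

Definition enc (c : config) : seq nat := rcons (map rkG c.1) (rkQ c.2).

Definition llex_le (c c' : config) : bool :=
  (size c.1 < size c'.1) || ((size c.1 == size c'.1) && lex_le (enc c) (enc c')).

Definition is_rep (c r : config) : Prop :=
  [/\ reachable r, same_lang r c &
      forall r', reachable r' -> same_lang r' c -> llex_le r r'].

Definition is_sigma0 (w : seq Sigma) (s : seq (Q A)) : Prop :=
  size s = size w /\
  forall i, i < size w -> is_rep (delta init (drop i w)) ([::], nth (q0 A) s i).

Definition S0 (s : seq (Q A)) : Prop :=
  exists w, Desc kind w /\ is_sigma0 w s.

Definition S1 (t : seq (Q A + {ffun Q A -> Q A})%type) : Prop :=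
  exists w s, [/\ WM kind w, w <> [::], is_sigma0 w s &
                  t = inr (phi w) :: map inl (behead s)].

End VPA.

From HB Require Import structures.
From Pilot Require Import Defs.
From mathcomp Require Import all_boot.
From Stdlib Require Import Classical ClassicalEpsilon.

Set Implicit Arguments.
Unset Strict Implicit.
Unset Printing Implicit Defensive.

(** Reading a descending word from the initial configuration, every suffix ends with an
    empty stack, and the length-lexicographic representative of an empty-stack configuration
    again has an empty stack.  Hence the i-th letter of sigma_0(w) only depends on the state
    transformation phi of the suffix starting at i, and for w = u v the letters at the
    positions of u only depend on u and on the right context C = phi(v) in Q^Q.  A grammar
    whose nonterminals are the finitely many triples (W or D, phi(u), C) can thus generate
    these contributions along the inductive definitions of W and D, because phi(u v) and
    phi(a u b) are determined by phi(u) and phi(v).  For sigma_1 the same nonterminals carry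
    a flag that drops the first letter, and the start rule emits phi(w) in front. *)

Section Derivations.
Variables (T : eqType) (g : cfg T).
Local Notation derives := (@derives T g).

Lemma derives_cat s1 w1 s2 w2 :
  derives s1 w1 -> derives s2 w2 -> derives (s1 ++ s2) (w1 ++ w2).
Proof.
move=> d1 d2; elim: d1 => //= [t s w _ IH | X rhs s u w Xrhs d _ _ IH].
- exact: der_t.
- by rewrite -catA; apply: der_nt Xrhs d IH.
Qed.

Lemma derives_rule r u : r \in rules g -> derives r.2 u -> derives [:: inl r.1] u.
Proof.
by case: r => X rhs Xrhs d; rewrite -[u]cats0; apply: der_nt Xrhs d (der_nil g).
Qed.

Fixpoint yields (L : nt g -> seq T -> Prop) (s : seq (nt g + T)) (w : seq T) : Prop :=
  match s with
  | [::] => w = [::]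
  | inr t :: s' => exists2 w', w = t :: w' & yields L s' w'
  | inl X :: s' => exists u w', [/\ w = u ++ w', L X u & yields L s' w']
  end.

Lemma derives_yields L s w :
  (forall r u, r \in rules g -> yields L r.2 u -> L r.1 u) ->
  derives s w -> yields L s w.
Proof.
move=> closedL; elim=> //= [t s' w' _ IH | X rhs s' u w' Xrhs _ IHrhs _ IH].
- by exists w'.
- by exists u, w'; split=> //; apply: closedL _ _ Xrhs IHrhs.
Qed.

End Derivations.

Lemma ex_minimizer (T : Type) (f : T -> nat) (P : T -> Prop) x :
  P x -> exists2 m, P m & forall y, P y -> f m <= f y.
Proof.
have [n lt_fx] := ubnP (f x); elim: n x lt_fx => // n IH x lt_fx Px.
have [[y Py lt_yx]|no_smaller] := classic (exists2 y, P y & f y < f x).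
  exact: IH y (leq_trans lt_yx lt_fx) Py.
exists x => // y Py; rewrite leqNgt; apply/negP => lt_yx; apply: no_smaller.
by exists y.
Qed.

Lemma drop_cat_le (T : Type) n (s1 s2 : seq T) :
  n <= size s1 -> drop n (s1 ++ s2) = drop n s1 ++ s2.
Proof.
rewrite drop_cat leq_eqVlt => /orP[/eqP->|->] //.
by rewrite ltnn subnn drop0 drop_size.
Qed.

Section WordClasses.
Variables (Sigma : Type) (kind : Sigma -> letter_kind).
Local Notation WM := (WM kind).
Local Notation Desc := (Desc kind).

Lemma WM_Desc u : WM u -> Desc u.
Proof. by move=> wm_u; rewrite -[u]cats0; apply: D_wm wm_u (D_nil _). Qed.

Lemma Desc_cat u v : Desc u -> Desc v -> Desc (u ++ v).
Proof.
move=> du dv; elim: du => //= [u1 u2 wm_u1 _ IH | b u' ret_b _ IH].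
- by rewrite -catA; apply: D_wm wm_u1 IH.
- exact: D_ret ret_b IH.
Qed.

Lemma Desc_ret b : kind b = Ret -> Desc [:: b].
Proof. by move=> ret_b; apply: D_ret ret_b (D_nil _). Qed.

Lemma WM_drop w i : WM w -> Desc (drop i w).
Proof.
move=> wm_w; elim: wm_w i => [|a int_a|u v _ IHu wm_v IHv|a u b call_a ret_b wm_u IHu] i.
- exact: D_nil.
- by case: i => [|[|i]]; [apply/WM_Desc/WM_int | apply: D_nil ..].
- by rewrite drop_cat; case: ifP => _; [apply: Desc_cat (IHu i) (WM_Desc wm_v) | apply: IHv].
- case: i => [|i] /=; first exact/WM_Desc/WM_nest.
  rewrite -cats1 drop_cat; case: ifP => _; first exact: Desc_cat (IHu i) (Desc_ret ret_b).
  by case: (i - size u) => [|j]; [apply: Desc_ret | apply: D_nil].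
Qed.

Lemma Desc_drop w i : Desc w -> Desc (drop i w).
Proof.
move=> dw; elim: dw i => [|u v wm_u dv IH|b v ret_b dv IH] i.
- exact: D_nil.
- by rewrite drop_cat; case: ifP => _; [apply: Desc_cat (WM_drop i wm_u) dv | apply: IH].
- by case: i => [|i] /=; [apply: D_ret ret_b dv | apply: IH].
Qed.

End WordClasses.

Scheme Equality for letter_kind.
HB.instance Definition _ := comparableMixin letter_kind_eq_dec.

Section Runs.
Variables (Sigma : finType) (kind : Sigma -> letter_kind) (A : vpa kind).
Local Notation FF := {ffun Q A -> Q A}.
Local Notation nonterminal := (option (bool * bool * FF * FF)).
Local Notation delta := (@delta Sigma kind A).
Local Notation step := (@step Sigma kind A).
Local Notation phi := (@phi Sigma kind A).
Local Notation WM := (WM kind).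
Local Notation Desc := (Desc kind).

Lemma delta_cat c u v : delta c (u ++ v) = delta (delta c u) v.
Proof. exact: foldl_cat. Qed.

Lemma delta_cons c a u : delta c (a :: u) = delta (step c a) u.
Proof. by []. Qed.

Lemma delta_rcons c u b : delta c (rcons u b) = step (delta c u) b.
Proof. by rewrite -cats1 delta_cat. Qed.

Lemma phiE u p : phi u p = (delta ([::], p) u).2.
Proof. exact: ffunE. Qed.

Lemma step_call c a : kind a = Call ->
  step c a = (rcons c.1 (dcall c.2 a).2, (dcall c.2 a).1).
Proof. by rewrite /Defs.step => ->; case: dcall. Qed.

Lemma step_ret_rcons al x p b : kind b = Ret ->
  step (rcons al x, p) b = (al, dret p b (Some x)).
Proof. by rewrite /Defs.step => ->; rewrite /= rev_rcons revK. Qed.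

Lemma step_ret_nil p b : kind b = Ret -> step ([::], p) b = ([::], dret p b None).
Proof. by rewrite /Defs.step => ->. Qed.

Lemma WM_delta u al p : WM u -> delta (al, p) u = (al, phi u p).
Proof.
move=> wm_u; elim: wm_u al p => {u} [|a int_a|u v _ IHu _ IHv|a u b call_a ret_b _ IHu] al p;
  rewrite phiE //.
- by rewrite /Defs.delta /= /Defs.step int_a.
- by rewrite !delta_cat !IHu !IHv.
- rewrite !delta_cons !(step_call _ call_a) /= !delta_rcons !IHu.
  by rewrite (step_ret_rcons _ _ _ ret_b) (step_ret_rcons [::] _ _ ret_b).
Qed.

Lemma Desc_delta u p : Desc u -> delta ([::], p) u = ([::], phi u p).
Proof.
move=> du; elim: du p => {u} [|u v wm_u _ IH|b v ret_b _ IH] p; rewrite phiE //.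
- by rewrite !delta_cat (WM_delta _ _ wm_u) !IH.
- by rewrite !delta_cons (step_ret_nil _ ret_b) !IH.
Qed.

Lemma reachable_Desc v : Desc v -> reachable ([::], phi v (q0 A)).
Proof. by move=> dv; exists v; rewrite /Defs.init Desc_delta. Qed.

Definition idf : FF := [ffun p => p].
Definition ffcomp (f g : FF) : FF := [ffun p => f (g p)].
Definition nestf (a : Sigma) (P : FF) (b : Sigma) : FF :=
  [ffun p => dret (P (dcall p a).1) b (Some (dcall p a).2)].

Lemma idfE p : idf p = p. Proof. exact: ffunE. Qed.
Lemma ffcompE f g p : ffcomp f g p = f (g p). Proof. exact: ffunE. Qed.

Lemma phi_nil : phi [::] = idf.
Proof. by apply/ffunP => p; rewrite !ffunE. Qed.

Lemma phi_cat u v : Desc u -> phi (u ++ v) = ffcomp (phi v) (phi u).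
Proof.
by move=> du; apply/ffunP => p; rewrite ffcompE !phiE delta_cat Desc_delta.
Qed.

Lemma phi_ret b v : kind b = Ret -> phi (b :: v) = ffcomp (phi v) (phi [:: b]).
Proof. by move=> ret_b; apply: (phi_cat v (Desc_ret ret_b)). Qed.

Lemma phi_nest a u b : kind a = Call -> kind b = Ret -> WM u ->
  phi (a :: rcons u b) = nestf a (phi u) b.
Proof.
move=> call_a ret_b wm_u; apply/ffunP => p.
rewrite phiE ffunE delta_cons (step_call _ call_a) delta_rcons /=.
by rewrite (WM_delta _ _ wm_u) (step_ret_rcons [::] _ _ ret_b).
Qed.

Inductive production :=
| EpsP of bool & FF
| IntP of bool & Sigma & FF
| CatP of bool & bool & FF & FF & FF
| NestP of bool & Sigma & FF & Sigma & FF
| RetP of Sigma & FF & FF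
| StartP of FF.

Definition production_code : Type :=
  bool * FF + bool * Sigma * FF + bool * bool * FF * FF * FF
  + bool * Sigma * FF * Sigma * FF + Sigma * FF * FF + FF.

Definition encode_production (r : production) : production_code :=
  match r with
  | EpsP wm C => inl (inl (inl (inl (inl (wm, C)))))
  | IntP be a C => inl (inl (inl (inl (inr (be, a, C)))))
  | CatP be wm P1 P2 C => inl (inl (inl (inr (be, wm, P1, P2, C))))
  | NestP be a P b C => inl (inl (inr (be, a, P, b, C)))
  | RetP b P C => inl (inr (b, P, C))
  | StartP P => inr P
  end.

Definition decode_production (x : production_code) : production :=
  match x with
  | inl (inl (inl (inl (inl (wm, C))))) => EpsP wm C
  | inl (inl (inl (inl (inr (be, a, C))))) => IntP be a C
  | inl (inl (inl (inr (be, wm, P1, P2, C)))) => CatP be wm P1 P2 C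
  | inl (inl (inr (be, a, P, b, C))) => NestP be a P b C
  | inl (inr (b, P, C)) => RetP b P C
  | inr P => StartP P
  end.

Lemma encode_productionK : cancel encode_production decode_production.
Proof. by case. Qed.

HB.instance Definition _ := Finite.copy production (can_type encode_productionK).

Definition production_ok (r : production) : bool :=
  match r with
  | IntP _ a _ => kind a == Int
  | NestP _ a _ b _ => (kind a == Call) && (kind b == Ret)
  | RetP b _ _ => kind b == Ret
  | _ => true
  end.

Section Representatives.
Variables (rkG : G A -> nat) (rkQ : Q A -> nat).
Hypothesis rkQ_inj : injective rkQ.
Local Notation is_rep := (is_rep rkG rkQ).
Local Notation llex_le := (llex_le rkG rkQ).

Lemma llex_le_nil q q' : llex_le ([::], q) ([::], q') = (rkQ q <= rkQ q').
Proof. by rewrite /Defs.llex_le /= andbT orbC -leq_eqVlt. Qed.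

Lemma rep_nil_exists p : reachable ([::], p) -> exists q, is_rep ([::], p) ([::], q).
Proof.
move=> reach_p.
pose P q := reachable ([::], q) /\ same_lang ([::], q) ([::], p).
have [q [reach_q same_q] min_q] := @ex_minimizer _ rkQ P p (conj reach_p (fun w => iff_refl _)).
(* [llex_le] compares stack heights first. *)
exists q; split=> // -[[|x al] q'] reach' same' //.
by rewrite llex_le_nil; apply: min_q.
Qed.

Lemma rep_nil_unique c q1 q2 : is_rep c ([::], q1) -> is_rep c ([::], q2) -> q1 = q2.
Proof.
move=> [reach1 same1 min1] [reach2 same2 min2]; apply: rkQ_inj; apply/eqP.
by rewrite eqn_leq -!llex_le_nil (min1 _ reach2 same2) (min2 _ reach1 same1).
Qed.

(* Junk unless [([::], p)] is reachable. *)
Definition rep_state (p : Q A) : Q A :=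
  epsilon (inhabits p) (fun q => is_rep ([::], p) ([::], q)).

Lemma rep_stateP p : reachable ([::], p) -> is_rep ([::], p) ([::], rep_state p).
Proof. by move/rep_nil_exists; apply: epsilon_spec. Qed.

(* [sigma0_in C v] is the part of sigma_0(v w) at the positions of [v], for any descending [w]
   with [phi w = C]. *)
Fixpoint sigma0_in (C : FF) (v : seq Sigma) : seq (Q A) :=
  if v is _ :: v' then rep_state (C (phi v (q0 A))) :: sigma0_in C v' else [::].

Lemma size_sigma0_in C v : size (sigma0_in C v) = size v.
Proof. by elim: v => //= a v ->. Qed.

Lemma sigma0_in_cat C u v : Desc u ->
  sigma0_in C (u ++ v) = sigma0_in (ffcomp C (phi v)) u ++ sigma0_in C v.
Proof.
elim: u => [|a u IH] //= du.
have du' : Desc u by have := Desc_drop 1 du; rewrite drop1.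
by rewrite (phi_cat _ du) !ffcompE IH.
Qed.

Lemma nth_sigma0_in C w i : i < size w ->
  nth (q0 A) (sigma0_in C w) i = rep_state (C (phi (drop i w) (q0 A))).
Proof. by elim: w i => [|a w IH] [|i] //= /IH. Qed.

Lemma is_sigma0_iff w s : Desc w -> is_sigma0 rkG rkQ w s <-> s = sigma0_in idf w.
Proof.
move=> dw.
have rep_nth i : i < size w ->
    is_rep (delta (init A) (drop i w)) ([::], nth (q0 A) (sigma0_in idf w) i).
  move=> lt_i; have dwi := Desc_drop i dw.
  by rewrite nth_sigma0_in // idfE /Defs.init Desc_delta //; apply/rep_stateP/reachable_Desc.
split=> [[size_s nth_s]|->]; last by split; [apply: size_sigma0_in | apply: rep_nth].
apply: (@eq_from_nth _ (q0 A)) => [|i]; first by rewrite size_sigma0_in.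
by rewrite size_s => lt_i; apply: rep_nil_unique (nth_s i lt_i) (rep_nth i lt_i).
Qed.

Section Grammar.
Variables (T : eqType) (emb : Q A -> T).
Variable start_rhs : FF -> seq (nonterminal + T).

Local Notation factor be wm P C := (@inl nonterminal T (Some (be, wm, P, C))).
Local Notation emit C P := (@inr nonterminal T (emb (rep_state (C (P (q0 A)))))).

Definition production_rule (r : production) : nonterminal * seq (nonterminal + T) :=
  match r with
  | EpsP wm C => (Some (false, wm, idf, C), [::])
  | IntP be a C => (Some (be, true, phi [:: a], C), drop be [:: emit C (phi [:: a])])
  | CatP be wm P1 P2 C =>
      (Some (be, wm, ffcomp P2 P1, C), [:: factor be true P1 (ffcomp C P2); factor false wm P2 C])
  | NestP be a P b C =>
      (Some (be, true, nestf a P b, C),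
       drop be [:: emit C (nestf a P b); factor false true P (ffcomp C (phi [:: b]));
                   emit C (phi [:: b])])
  | RetP b P C =>
      (Some (false, false, ffcomp P (phi [:: b]), C),
       [:: emit C (ffcomp P (phi [:: b])); factor false false P C])
  | StartP P => (None, start_rhs P)
  end.

Definition vpa_grammar : cfg T :=
  @CFG T nonterminal None [seq production_rule r | r <- enum {: production} & production_ok r].

Local Notation derives := (@derives T vpa_grammar).
Local Notation yields := (@yields T vpa_grammar).

Lemma derives_production r u : production_ok r ->
  derives (production_rule r).2 u -> derives [:: inl (production_rule r).1] u.
Proof.
by move=> ok_r; apply/derives_rule/map_f; rewrite mem_filter ok_r mem_enum.
Qed.

(* The nonterminal [Some (be, wm, P, C)] generates [factor_lang be wm P C]: the images of
   [sigma0_in C v] for the well-matched (if [wm]) or descending words [v] with [phi v = P],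
   without their first letter if [be] (a boolean read as the number 0 or 1 by [drop]). *)
Definition factor_lang (be wm : bool) (P C : FF) (u : seq T) : Prop :=
  exists v, [/\ if wm then WM v else Desc v, be <= size v, phi v = P
              & u = map emb (drop be (sigma0_in C v))].

Lemma derives_WM v (be : bool) (C : FF) : WM v -> be <= size v ->
  derives [:: factor be true (phi v) C] (map emb (drop be (sigma0_in C v))).
Proof.
move=> wm_v; elim: wm_v be C => {v} [|a int_a|u v wm_u IHu wm_v IHv|a u b call_a ret_b wm_u IHu]
  be C le_be.
- case: be le_be => // _; rewrite phi_nil.
  by apply: (derives_production (r := EpsP true C)) => //; apply: der_nil.
- apply: (derives_production (r := IntP be a C)); first exact/eqP.
  by case: be {le_be}; [apply: der_nil | apply/der_t/der_nil].
- have [le_be_u|] := leqP be (size u); last first.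
    by case: be le_be => //; case: u {IHu wm_u} => //= le_1_v _; apply: IHv.
  have du := WM_Desc wm_u; rewrite phi_cat // sigma0_in_cat //.
  apply: (derives_production (r := CatP be true (phi u) (phi v) C)) => //=.
  rewrite drop_cat_le ?size_sigma0_in // map_cat.
  have d_v := IHv false C isT; rewrite drop0 in d_v.
  exact: derives_cat (IHu _ _ le_be_u) d_v.
- rewrite /= (phi_nest call_a ret_b wm_u) -cats1 (sigma0_in_cat _ _ (WM_Desc wm_u)).
  apply: (derives_production (r := NestP be a (phi u) b C)); first by rewrite /= call_a ret_b.
  have d_u := IHu false (ffcomp C (phi [:: b])) isT; rewrite drop0 in d_u.
  have d_body := derives_cat d_u (der_t (emb (rep_state (C (phi [:: b] (q0 A))))) (der_nil _)).
  by case: be {le_be} => /=; rewrite ?drop0 map_cat //; apply: der_t.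
Qed.

Lemma derives_Desc v (C : FF) : Desc v ->
  derives [:: factor false false (phi v) C] (map emb (sigma0_in C v)).
Proof.
move=> dv; elim: dv C => {v} [|u v wm_u dv IHv|b v ret_b dv IHv] C.
- rewrite phi_nil.
  by apply: (derives_production (r := EpsP false C)) => //; apply: der_nil.
- have du := WM_Desc wm_u; rewrite phi_cat // sigma0_in_cat // map_cat.
  apply: (derives_production (r := CatP false false (phi u) (phi v) C)) => //=.
  have d_u := derives_WM (be := false) (ffcomp C (phi v)) wm_u isT; rewrite drop0 in d_u.
  exact: derives_cat d_u (IHv C).
- rewrite /= (phi_ret v ret_b).
  apply: (derives_production (r := RetP b (phi v) C)); first exact/eqP.
  exact/der_t/IHv.
Qed.

Lemma factor_lang_nil wm C : factor_lang false wm idf C [::].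
Proof. by exists [::]; split=> //; case: wm; constructor. Qed.

Lemma factor_lang_int be a C : kind a = Int ->
  factor_lang be true (phi [:: a]) C (drop be [:: emb (rep_state (C (phi [:: a] (q0 A))))]).
Proof. by move=> int_a; exists [:: a]; split; [apply: WM_int | case: be | by [] | case: be]. Qed.

Lemma factor_lang_cat be wm P1 P2 C u1 u2 :
  factor_lang be true P1 (ffcomp C P2) u1 -> factor_lang false wm P2 C u2 ->
  factor_lang be wm (ffcomp P2 P1) C (u1 ++ u2).
Proof.
move=> [v1 [wm_v1 le_be <- ->]] [v2 [v2_wm _ <- ->]].
have dv1 := WM_Desc wm_v1.
exists (v1 ++ v2); split.
- by case: wm v2_wm => ?; [apply: WM_cat | apply: D_wm].
- by rewrite size_cat (leq_trans le_be) ?leq_addr.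
- exact: phi_cat.
- by rewrite sigma0_in_cat // drop_cat_le ?size_sigma0_in // drop0 map_cat.
Qed.

Lemma factor_lang_nest be a P b C u : kind a = Call -> kind b = Ret ->
  factor_lang false true P (ffcomp C (phi [:: b])) u ->
  factor_lang be true (nestf a P b) C
    (drop be (emb (rep_state (C (nestf a P b (q0 A))))
              :: u ++ [:: emb (rep_state (C (phi [:: b] (q0 A))))])).
Proof.
move=> call_a ret_b [v [wm_v _ <- ->]].
exists (a :: rcons v b); split; [exact: WM_nest | by case: be | exact: phi_nest |].
rewrite /= (phi_nest call_a ret_b wm_v) -cats1 (sigma0_in_cat _ _ (WM_Desc wm_v)).
by case: be; rewrite /= !drop0 map_cat.
Qed.

Lemma factor_lang_ret b P C u : kind b = Ret -> factor_lang false false P C u ->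
  factor_lang false false (ffcomp P (phi [:: b])) C
    (emb (rep_state (C (ffcomp P (phi [:: b]) (q0 A)))) :: u).
Proof.
move=> ret_b [v [dv _ <- ->]]; exists (b :: v); split; [exact: D_ret | by [] | exact: phi_ret |].
by rewrite /= (phi_ret v ret_b) !drop0.
Qed.

Section Soundness.
Variable L0 : seq T -> Prop.

Definition nt_lang (X : nonterminal) : seq T -> Prop :=
  if X is Some (be, wm, P, C) then factor_lang be wm P C else L0.

Hypothesis start_sound : forall P u, yields nt_lang (start_rhs P) u -> L0 u.

Lemma production_rule_sound r u : production_ok r ->
  yields nt_lang (production_rule r).2 u -> nt_lang (production_rule r).1 u.
Proof.
case: r => [wm C|be a C|be wm P1 P2 C|be a P b C|b P C|P] /=.
- by move=> _ ->; apply: factor_lang_nil.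
- move=> /eqP/(factor_lang_int be C); case: be => /= flang; first by move->.
  by case=> _ -> ->.
- by move=> _ [u1 [_ [-> f1 [u2 [_ [-> f2 ->]]]]]]; rewrite cats0; apply: factor_lang_cat.
- case/andP=> /eqP call_a /eqP ret_b; case: be => /=.
    case=> u1 [_ [-> f1 [_ -> ->]]].
    by have := factor_lang_nest true call_a ret_b f1; rewrite /= drop0.
  by case=> _ -> [u1 [_ [-> f1 [_ -> ->]]]]; apply: (factor_lang_nest false call_a ret_b f1).
- by move=> /eqP ret_b [_ -> [u1 [_ [-> f1 ->]]]]; rewrite cats0; apply: factor_lang_ret.
- by move=> _; apply: start_sound.
Qed.

Lemma vpa_grammar_sound w : generates vpa_grammar w -> L0 w.
Proof.
have closed p u : p \in rules vpa_grammar -> yields nt_lang p.2 u -> nt_lang p.1 u.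
  by case/mapP=> r; rewrite mem_filter => /andP[ok_r _] ->; apply: production_rule_sound.
by move=> /(derives_yields closed) /= [u [_ [-> L0u ->]]]; rewrite cats0.
Qed.

End Soundness.

End Grammar.

Lemma S0_context_free : context_free (S0 rkG rkQ).
Proof.
pose start_rhs P : seq (nonterminal + Q A) := [:: inl (Some (false, false, P, idf))].
exists (vpa_grammar id start_rhs) => s; split.
- case=> w [dw /(is_sigma0_iff _ dw) ->].
  apply: (derives_production (r := StartP (phi w))) => //=.
  by have := derives_Desc id start_rhs idf dw; rewrite map_id.
- apply: vpa_grammar_sound => P u /= [u1 [_ [-> [v [dv _ _ ->]] ->]]].
  by exists v; split=> //; apply/is_sigma0_iff; rewrite ?drop0 ?map_id ?cats0.
Qed.

Lemma S1_context_free : context_free (S1 rkG rkQ).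
Proof.
pose start_rhs P : seq (nonterminal + (Q A + FF)) :=
  [:: inr (inr P); inl (Some (true, true, P, idf))].
exists (vpa_grammar inl start_rhs) => t; split.
- case=> w [s [wm_w nonempty_w /(is_sigma0_iff _ (WM_Desc wm_w)) -> ->]].
  apply: (derives_production (r := StartP (phi w))) => //=.
  rewrite -drop1; apply/der_t/derives_WM => //.
  by case: w nonempty_w {wm_w}.
- apply: vpa_grammar_sound => P u /= [_ -> [u1 [_ [-> [v [wm_v le_1_v <- ->]] ->]]]].
  exists v, (sigma0_in idf v); split=> //.
  + by case: v le_1_v {wm_v}.
  + exact/(is_sigma0_iff _ (WM_Desc wm_v)).
  + by rewrite drop1 cats0.
Qed.

End Representatives.

End Runs.

Theorem lemma10 (Sigma : finType) (kind : Sigma -> letter_kind) (A : vpa kind)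
  (rkG : G A -> nat) (rkQ : Q A -> nat) (HrkG : injective rkG) (HrkQ : injective rkQ) :
  context_free (@S0 Sigma kind A rkG rkQ) /\ context_free (@S1 Sigma kind A rkG rkQ).
Proof. by split; [apply: S0_context_free HrkQ | apply: S1_context_free HrkQ]. Qed.
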